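(* Assume $\mathcal{H}$ is symmetric and complete. Then for every $h\in\mathcal{H}$ and $x\in\mathcal{X}$, the conditional regret of the deferral loss is $$\Delta\mathcal{C}_{\mathsf{L}_{\mathrm{def}},\mathcal{H}}(h,x)=\max\{p_{y_{\max}},p_{n+1}\}-p_{\mathsf{h}},$$ where $p_y=p(x,y)$ for $y\in\mathcal{Y}$, $p_{n+1}=\sum_{y\in\mathcal{Y}}p(x,y)(1-c(x,y))$, $y_{\max}=\operatorname{argmax}_{y\in\mathcal{Y}}p_y$, and $p_{\mathsf{h}}=p_{\mathsf{h}(x)}$ (which equals $p_{n+1}$ when $\mathsf{h}(x)=n+1$).
   Context: Learning to defer: $\mathcal{X}$ input space, $\mathcal{Y}=[n]$, $\overline{\mathcal{Y}}=\{1,\dots,n+1\}$; hypotheses $h\colon\mathcal{X}\times\overline{\mathcal{Y}}\to\mathbb{R}$ with $\mathsf{h}(x)=\operatorname{argmax}_{y\in\overline{\mathcal{Y}}}h(x,y)$ (fixed deterministic tie-breaking); cost $c\colon\mathcal{X}\times\mathcal{Y}\to[0,1]$; deferral loss $\mathsf{L}_{\mathrm{def}}(h,x,y)=1_{\mathsf{h}(x)\neq y}1_{\mathsf{h}(x)\in[n]}+c(x,y)1_{\mathsf{h}(x)=n+1}$. A distribution on $\mathcal{X}\times\mathcal{Y}$ is fixed, with $p(x,y)=\mathbb{P}(Y=y\mid X=x)$. $\mathcal{C}_{\mathsf{L}}(h,x)=\mathbb{E}_{y\mid x}[\mathsf{L}(h,x,y)]$ and $\Delta\mathcal{C}_{\mathsf{L},\mathcal{H}}(h,x)=\mathcal{C}_{\mathsf{L}}(h,x)-\inf_{h'\in\mathcal{H}}\mathcal{C}_{\mathsf{L}}(h',x)$.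 $\mathcal{H}$ is symmetric if there is a family $\mathcal{F}$ of functions $\mathcal{X}\to\mathbb{R}$ with $\{[h(x,1),\dots,h(x,n+1)]:h\in\mathcal{H}\}=\{[f_1(x),\dots,f_{n+1}(x)]:f_i\in\mathcal{F}\}$ for all $x$; complete if $\{h(x,y):h\in\mathcal{H}\}=\mathbb{R}$ for all $(x,y)\in\mathcal{X}\times\mathcal{Y}$. *)

From HB Require Import structures.
From mathcomp Require Import all_boot all_order all_algebra.
From mathcomp Require Import all_classical all_reals.
Set Implicit Arguments. Unset Strict Implicit. Unset Printing Implicit Defensive.
Import Order.TTheory GRing.Theory Num.Theory.
Local Open Scope ring_scope.
Local Open Scope classical_set_scope.

(* Labels Y = 'I_n (0-based encoding of [n]); augmented labels
   Ybar = 'I_n.+1, where the deferral label n+1 is ord_max. *)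

Section Deferral.
Variables (R : realType) (X : Type) (n : nat).

Definition hyp := X -> 'I_n.+1 -> R.

Definition emb (y : 'I_n) : 'I_n.+1 := widen_ord (leqnSn n) y.

(* predicted label h(x) = argmax_y h(x,y), with a fixed deterministic
   tie-breaking rule sel (any selector of a maximiser). *)
Definition hpred (sel : ('I_n.+1 -> R) -> 'I_n.+1) (h : hyp) (x : X)
  : 'I_n.+1 := sel (h x).

Definition Ldef (sel : ('I_n.+1 -> R) -> 'I_n.+1) (c : X -> 'I_n -> R)
  (h : hyp) (x : X) (y : 'I_n) : R :=
  (if (hpred sel h x != emb y) && (hpred sel h x != ord_max) then 1 else 0)
  + c x y * (if hpred sel h x == ord_max then 1 else 0).

Definition condRisk (p : X -> 'I_n -> R) (L : hyp -> X -> 'I_n -> R)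
  (h : hyp) (x : X) : R := \sum_(y < n) p x y * L h x y.

Definition condRegret (p : X -> 'I_n -> R) (L : hyp -> X -> 'I_n -> R)
  (H : set hyp) (h : hyp) (x : X) : R :=
  condRisk p L h x - inf [set condRisk p L h' x | h' in H].

Definition symmetric_hyp (H : set hyp) : Prop :=
  exists F : set (X -> R), forall x : X,
    [set h x | h in H] =
    [set (fun y : 'I_n.+1 => f y x) | f in [set f : 'I_n.+1 -> X -> R |
                                            forall y, F (f y)]].

Definition complete_hyp (H : set hyp) : Prop :=
  forall (x : X) (y : 'I_n), [set h x (emb y) | h in H] = setT.

Definition pdef (p c : X -> 'I_n -> R) (x : X) : R :=
  \sum_(y < n) p x y * (1 - c x y).

Definition pbar (p c : X -> 'I_n -> R) (x : X) (yb : 'I_n.+1) : R :=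
  if unlift ord_max yb is Some y then p x y else pdef p c x.

End Deferral.

From HB Require Import structures.
From mathcomp Require Import all_boot all_order all_algebra.
From mathcomp Require Import all_classical all_reals.
Import Order.TTheory GRing.Theory Num.Theory.
Local Open Scope ring_scope.
Local Open Scope classical_set_scope.

(* The conditional risk of h at x is 1 - p_(h(x)), so it depends on h only
   through the label h(x).  Symmetry and completeness make every score vector
   realisable at x, hence every label t is predicted by some h in H (take the
   indicator of t); the infimum of the risk over H is therefore attained and
   equals 1 - max_t p_t. *)

Lemma lift_max_emb (n : nat) (y : 'I_n) : lift ord_max y = emb y.
Proof. exact/val_inj/lift_max. Qed.

Lemma emb_eq_max (n : nat) (y : 'I_n) : (emb y == ord_max) = false.
Proof. by rewrite -lift_max_emb eq_sym (negbTE (neq_lift _ _)). Qed.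

Lemma emb_inj (n : nat) : injective (@emb n).
Proof. by move=> y y' /(congr1 val) /= /val_inj. Qed.

Lemma inf_attained (R : realType) (E : set R) (m : R) :
  E m -> lbound E m -> inf E = m.
Proof.
move=> Em lbEm; apply/eqP; rewrite eq_le lb_le_inf ?andbT //; last by exists m.
exact: (ge_inf (ex_intro _ m lbEm)).
Qed.

Section DeferralRisk.
Variables (R : realType) (X : Type) (n : nat).
Variables (sel : ('I_n.+1 -> R) -> 'I_n.+1) (p c : X -> 'I_n -> R) (x : X).
Variable H : set (hyp R X n).
Hypothesis sel_max : forall (f : 'I_n.+1 -> R) y, f y <= f (sel f).
Hypotheses (p_ge0 : forall y, 0 <= p x y) (p_sum1 : \sum_(y < n) p x y = 1).
Hypotheses (Hsym : symmetric_hyp H) (Hcomp : complete_hyp H).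

Lemma Ldef_emb {h : hyp R X n} {y'} : hpred sel h x = emb y' ->
  forall y, Ldef sel c h x y = (y != y')%:R.
Proof.
rewrite /Ldef => -> y.
rewrite emb_eq_max (inj_eq (@emb_inj n)) eq_sym andbT mulr0 addr0.
by case: (y != y').
Qed.

Lemma Ldef_max {h : hyp R X n} : hpred sel h x = ord_max ->
  forall y, Ldef sel c h x y = c x y.
Proof. by rewrite /Ldef => -> y; rewrite eqxx andbF mulr1 add0r. Qed.

Lemma condRisk_Ldef (h : hyp R X n) :
  condRisk p (Ldef sel c) h x = 1 - pbar p c x (hpred sel h x).
Proof.
rewrite /condRisk /pbar -{1}p_sum1.
case: unliftP => [y'|] hx.
  rewrite lift_max_emb in hx.
  under eq_bigr => y _ do rewrite (Ldef_emb hx).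
  rewrite [in RHS](bigD1 y') //= addrAC subrr add0r (bigD1 y') //= eqxx mulr0 add0r.
  by apply: eq_bigr => y ->; rewrite mulr1.
under eq_bigr => y _ do rewrite (Ldef_max hx).
rewrite /pdef -sumrB; apply: eq_bigr => y _.
by rewrite mulrBr mulr1 opprB addrC subrK.
Qed.

Lemma pbar_le_max t :
  pbar p c x t <= Num.max (\big[Num.max/0]_(y < n) p x y) (pdef p c x).
Proof.
rewrite /pbar le_max; case: unlift => [y|]; last by rewrite lexx orbT.
by rewrite le_bigmax.
Qed.

Lemma pbar_eq_max (y0 : 'I_n) :
  exists t, pbar p c x t = Num.max (\big[Num.max/0]_(y < n) p x y) (pdef p c x).
Proof.
have [y _ ->] := eq_bigmax y0 predT (p x) isT (fun y _ => p_ge0 y).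
have [_|_] := leP (p x y) (pdef p c x).
  by exists ord_max; rewrite /pbar unlift_none.
by exists (lift ord_max y); rewrite /pbar liftK.
Qed.

Lemma symmetric_complete_scores (y0 : 'I_n) (v : 'I_n.+1 -> R) :
  exists2 h, H h & h x = v.
Proof.
have [F HF] := Hsym.
have F_onto r : exists2 f, F f & f x = r.
  have [h1 Hh1 <-] : [set h x (emb y0) | h in H] r by rewrite Hcomp.
  have : [set h x | h in H] (h1 x) by exists h1.
  by rewrite HF => -[f Ff <-]; exists (f (emb y0)).
have [f Ff] : {f : 'I_n.+1 -> X -> R & forall y, F (f y) /\ f y x = v y}.
  apply: (@boolp.choice _ _ (fun y g => F g /\ g x = v y)) => y.
  by have [g Fg gx] := F_onto (v y); exists g.
suff : [set h x | h in H] v by case=> h Hh hx; exists h.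
rewrite HF; exists f => [y|]; first by case: (Ff y).
by apply/boolp.funext => y; case: (Ff y).
Qed.

Lemma hpred_onto (y0 : 'I_n) t : exists2 h, H h & hpred sel h x = t.
Proof.
have [h Hh hx] := symmetric_complete_scores y0 (fun y => (y == t)%:R).
exists h => //; rewrite /hpred hx.
by have := sel_max (fun y => (y == t)%:R) t; rewrite eqxx; case: eqP; rewrite ?ler10.
Qed.

Lemma labels_gt0 : (0 < n)%N.
Proof.
case: (pickP (@predT 'I_n)) => [y _|none]; first exact: leq_ltn_trans (ltn_ord y).
by move: p_sum1; rewrite big_pred0 // => /eqP; rewrite eq_sym oner_eq0.
Qed.

Lemma inf_condRisk :
  inf [set condRisk p (Ldef sel c) h x | h in H] =
  1 - Num.max (\big[Num.max/0]_(y < n) p x y) (pdef p c x).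
Proof.
pose y0 := Ordinal labels_gt0; apply: inf_attained.
  have [t <-] := pbar_eq_max y0.
  have [h Hh <-] := hpred_onto y0 t.
  by exists h => //; rewrite condRisk_Ldef.
by move=> _ [h _ <-]; rewrite condRisk_Ldef lerD2l lerN2 pbar_le_max.
Qed.

End DeferralRisk.

Theorem lemma8 (R : realType) (X : Type) (n : nat)
  (sel : ('I_n.+1 -> R) -> 'I_n.+1)
  (sel_max : forall (f : 'I_n.+1 -> R) (y : 'I_n.+1), f y <= f (sel f))
  (p : X -> 'I_n -> R)
  (p_ge0 : forall x y, 0 <= p x y)
  (p_sum1 : forall x, \sum_(y < n) p x y = 1)
  (c : X -> 'I_n -> R)
  (c_ge0 : forall x y, 0 <= c x y) (c_le1 : forall x y, c x y <= 1)
  (H : set (hyp R X n))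
  (Hsym : symmetric_hyp H) (Hcomp : complete_hyp H) :
  forall (h : hyp R X n) (x : X), H h ->
    condRegret p (Ldef sel c) H h x =
    Num.max (\big[Num.max/0]_(y < n) p x y) (pdef p c x)
      - pbar p c x (hpred sel h x).
Proof.
move=> h x _.
have [p_ge0x p_sum1x] := (p_ge0 x, p_sum1 x).
rewrite /condRegret inf_condRisk // condRisk_Ldef //.
by rewrite opprB addrC addrA addrNK.
Qed.
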